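(* Let $k=\mathbb{F}_q$ with $q$ odd, $q>3$, $n\ge1$, $A=M_{2n}(k)$, $J_{2n}=\begin{pmatrix}0&I_n\\-I_n&0\end{pmatrix}$, $a^{\sim}=J_{2n}a^tJ_{2n}^{-1}$. Let $V=k^{2n}$ (row vectors) with $[x,y]=x\,(yJ_{2n})^{t}$, let $M=V^2$ with right $A$-action $(x,y)a=(xa,ya)$, let $\psi$ be a nontrivial character of $(k,+)$, and define $\chi((x,y),(v,z))=\psi([x,z]-[y,v])$ and $\gamma(u,(x,y))=\psi([xu,y])$ for $u\in A$ with $u^{\sim}=u$. Let $\mathrm{U}(\gamma,\chi)$ be the group of all $A$-linear automorphisms $\beta$ of $M$ such that $\gamma(u,\beta(m))=\gamma(u,m)$ for all $u\in A$ with $u^\sim=u$ and all $m\in M$, and $\chi(\beta(m),\beta(m'))=\chi(m,m')$ for all $m,m'\in M$. Then $\mathrm{U}(\gamma,\chi)\cong\mathrm{SL}_2(k)$. *)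

From HB Require Import structures.
From mathcomp Require Import all_boot all_order all_algebra all_field.
Set Implicit Arguments. Unset Strict Implicit. Unset Printing Implicit Defensive.
Import Order.TTheory GRing.Theory Num.Theory.
Local Open Scope ring_scope.

Section Defs.
Variables (k : fieldType) (n : nat).

Definition Jmat : 'M[k]_(n + n) := block_mx 0 1%:M (- 1%:M) 0.

Definition tildemx (a : 'M[k]_(n + n)) : 'M[k]_(n + n) :=
  Jmat *m a^T *m invmx Jmat.

Definition sform (x y : 'rV[k]_(n + n)) : k := (x *m (y *m Jmat)^T) 0 0.

Definition Mod := ('rV[k]_(n + n) * 'rV[k]_(n + n))%type.

Definition mact (m : Mod) (a : 'M[k]_(n + n)) : Mod := (m.1 *m a, m.2 *m a).

Definition madd (m m' : Mod) : Mod := (m.1 + m'.1, m.2 + m'.2).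

Definition chiM (psi : k -> algC) (m m' : Mod) : algC :=
  psi (sform m.1 m'.2 - sform m.2 m'.1).

Definition gammaM (psi : k -> algC) (u : 'M[k]_(n + n)) (m : Mod) : algC :=
  psi (sform (m.1 *m u) m.2).

Definition A_linear_aut (b : Mod -> Mod) : Prop :=
  [/\ bijective b,
      (forall m m', b (madd m m') = madd (b m) (b m')) &
      (forall m a, b (mact m a) = mact (b m) a)].

Definition in_U (psi : k -> algC) (b : Mod -> Mod) : Prop :=
  [/\ A_linear_aut b,
      (forall u, tildemx u = u -> forall m, gammaM psi u (b m) = gammaM psi u m) &
      (forall m m', chiM psi (b m) (b m') = chiM psi m m')].

End Defs.

Definition nontriv_add_char (k : fieldType) (psi : k -> algC) : Prop :=
  [/\ (forall a b, psi (a + b) = psi a * psi b),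
      (forall a, psi a != 0) &
      exists a, psi a != 1].

(** The matrix g = [[a, b], [c, d]] acts on M = V^2 by (x, y) |-> (a x + b y, c x + d y).
    This action commutes with the right A-action, and it multiplies by det g both the
    pairing [x, z] - [y, v] underlying chi and the form [x u, y] underlying gamma; the
    latter is alternating for u = u^~ because 2 is invertible in k.  Conversely V is a
    cyclic A-module, generated by any basis row vector e, so an A-linear endomorphism of
    V^2 is determined by the images of (e, 0) and (0, e) and is therefore such a matrix
    action.  Invariance of chi then gives psi (det g * t) = psi t for all t, which forces
    det g = 1 since psi is nontrivial. *)

From HB Require Import structures.
From mathcomp Require Import all_boot all_order all_algebra all_field.
From mathcomp Require Import fingroup cyclic ring.
Set Implicit Arguments. Unset Strict Implicit.
Import Order.TTheory GRing.Theory Num.Theory.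
Local Open Scope ring_scope.

Lemma ord2_cases (i : 'I_2) : i = ord0 \/ i = ord_max.
Proof. by case: i => [[|[|//]]] ?; [left | right]; apply: val_inj. Qed.

Lemma lift0_ord_max : lift ord0 (ord0 : 'I_1) = ord_max :> 'I_2.
Proof. exact: val_inj. Qed.

Lemma det_mx2 (R : comPzRingType) (g : 'M[R]_2) :
  \det g = g ord0 ord0 * g ord_max ord_max - g ord0 ord_max * g ord_max ord0.
Proof.
rewrite (expand_det_row _ ord0) !big_ord_recl big_ord0 /cofactor !det_mx11 !mxE /=.
rewrite !lift0_ord_max (_ : lift ord_max _ = ord0); last exact: val_inj.
by rewrite /bump /= expr0 expr1; ring.
Qed.

Lemma mulmx2E (R : comPzRingType) (g h : 'M[R]_2) i j :
  (g *m h) i j = g i ord0 * h ord0 j + g i ord_max * h ord_max j.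
Proof. by rewrite !mxE !big_ord_recl big_ord0 lift0_ord_max addr0. Qed.

Lemma two_neq0_odd_card (F : finFieldType) : odd #|F| -> 2%:R != 0 :> F.
Proof.
move=> oddF; apply: contraTneq oddF => two0.
have o1_dvd2 : (#[(1 : F)%R]%g %| 2)%N by rewrite order_dvdn FinRing.zmodXgE two0.
have /primeP[_ /(_ _ o1_dvd2)/orP[|/eqP o1_2]] : prime 2 by [].
  by rewrite order_eq1 oner_eq0.
by rewrite -dvdn2 -o1_2 -cardsT order_dvdG ?inE.
Qed.

Lemma nontriv_char_scale_eq1 (k : fieldType) (psi : k -> algC) (c : k) :
  nontriv_add_char psi -> (forall t, psi (c * t) = psi t) -> c = 1.
Proof.
case=> psiD psi_neq0 [a psia_neq1] psi_c; apply/eqP; apply: contraLR psia_neq1.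
rewrite negbK -subr_eq0 => c1_neq0.
have shift : c * (a / (c - 1)) = a / (c - 1) + a by field; rewrite c1_neq0.
have := psi_c (a / (c - 1)); rewrite shift psiD -[X in _ = X]mulr1.
by move=> /(mulfI (psi_neq0 _)) ->.
Qed.

Section SymplecticForm.
Variables (k : fieldType) (n : nat).
Local Notation V := 'rV[k]_(n + n).
Local Notation J := (Jmat k n).

Lemma sformDl (a b : k) (x y z : V) :
  sform (a *: x + b *: y) z = a * sform x z + b * sform y z.
Proof. by rewrite /sform mulmxDl -!scalemxAl !mxE. Qed.

Lemma sformDr (a b : k) (x y z : V) :
  sform z (a *: x + b *: y) = a * sform z x + b * sform z y.
Proof. by rewrite /sform mulmxDl !linearD /= -!scalemxAl !linearZ /= !mxE. Qed.

Lemma sform0l (y : V) : sform 0 y = 0.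
Proof. by rewrite /sform mul0mx mxE. Qed.

Lemma mulmx_JJ : J *m J = - 1%:M.
Proof.
rewrite /Jmat mulmx_block !mulmx0 !mul0mx !mulmx1 !mul1mx !addr0 !add0r.
by rewrite (scalar_mx_block n n 1) opp_block_mx oppr0.
Qed.

Lemma Jmat_unit : J \in unitmx.
Proof. by case: (@mulmx1_unit _ _ J (- J)); rewrite // mulmxN mulmx_JJ opprK. Qed.

Lemma trmx_Jmat : J^T = - J.
Proof.
by rewrite /Jmat tr_block_mx !trmx0 trmx1 linearN /= trmx1 opp_block_mx !oppr0 opprK.
Qed.

Lemma sformE (x y : V) : sform x y = - (x *m J *m y^T) 0 0.
Proof. by rewrite /sform trmx_mul trmx_Jmat mulNmx mulmxN mulmxA mxE. Qed.

Lemma sform_invJ (x y : V) : sform x (y *m invmx J) = (x *m y^T) 0 0.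
Proof. by rewrite /sform -mulmxA mulVmx ?Jmat_unit // mulmx1. Qed.

Lemma tildemx_fixed_mulmxJ u : tildemx u = u -> u *m J = J *m u^T.
Proof.
by move=> u_fixed; rewrite -{1}u_fixed /tildemx -mulmxA mulVmx ?Jmat_unit // mulmx1.
Qed.

Lemma sform_tildemx_skew u (x y : V) :
  tildemx u = u -> sform (y *m u) x = - sform (x *m u) y.
Proof.
move=> u_fixed; rewrite !sformE opprK.
have tr : (x *m u *m J *m y^T)^T = - (y *m u *m J *m x^T).
  rewrite !trmx_mul !trmxK trmx_Jmat !mulNmx !mulmxN !mulmxA.
  by rewrite -(mulmxA y) tildemx_fixed_mulmxJ // !mulmxA.
have -> : (x *m u *m J *m y^T) 0 0 = (x *m u *m J *m y^T)^T 0 0 by rewrite [RHS]mxE.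
by rewrite tr [RHS]mxE.
Qed.

Lemma sform_tildemx_alt u (x : V) :
  2%:R != 0 :> k -> tildemx u = u -> sform (x *m u) x = 0.
Proof.
move=> two_neq0 u_fixed; apply/eqP; rewrite -(mulrI_eq0 _ (mulfI two_neq0)).
by rewrite mulr_natl mulr2n {1}(sform_tildemx_skew x x u_fixed) addNr.
Qed.

End SymplecticForm.

Section MatrixAction.
Variables (k : fieldType) (n : nat).

Definition mx2_act (g : 'M[k]_2) (m : Mod k n) : Mod k n :=
  (g ord0 ord0 *: m.1 + g ord0 ord_max *: m.2,
   g ord_max ord0 *: m.1 + g ord_max ord_max *: m.2).

Lemma mx2_actM g h m : mx2_act (g *m h) m = mx2_act g (mx2_act h m).
Proof.
by rewrite /mx2_act /= !mulmx2E; congr (_, _); apply/rowP => j; rewrite !mxE; ring.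
Qed.

Lemma mx2_act1 m : mx2_act 1%:M m = m.
Proof. by case: m => x y; congr (_, _); apply/rowP => j; rewrite !mxE /=; ring. Qed.

Lemma mx2_actD g m m' : mx2_act g (madd m m') = madd (mx2_act g m) (mx2_act g m').
Proof. by congr (_, _); apply/rowP => j; rewrite !mxE; ring. Qed.

Lemma mx2_act_mact g m a : mx2_act g (mact m a) = mact (mx2_act g m) a.
Proof. by rewrite /mx2_act /mact /= !mulmxDl -!scalemxAl. Qed.

Lemma mx2_act_A_linear_aut g : g \in unitmx -> A_linear_aut (mx2_act g).
Proof.
move=> g_unit; split; [|exact: mx2_actD | exact: mx2_act_mact].
by exists (mx2_act (invmx g)) => m; rewrite -mx2_actM ?mulVmx ?mulmxV ?mx2_act1.
Qed.

Lemma mx2_act_pairing g m m' :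
  sform (mx2_act g m).1 (mx2_act g m').2 - sform (mx2_act g m).2 (mx2_act g m').1
  = \det g * (sform m.1 m'.2 - sform m.2 m'.1).
Proof. by rewrite /= !sformDl !sformDr det_mx2; ring. Qed.

Lemma mx2_act_tildemx_form g u m : 2%:R != 0 :> k -> tildemx u = u ->
  sform ((mx2_act g m).1 *m u) (mx2_act g m).2 = \det g * sform (m.1 *m u) m.2.
Proof.
move=> two_neq0 u_fixed; rewrite /= mulmxDl -!scalemxAl sformDl !sformDr.
by rewrite !sform_tildemx_alt // (sform_tildemx_skew m.1 m.2 u_fixed) det_mx2; ring.
Qed.

End MatrixAction.

Section BasisVector.
Variables (k : fieldType) (n : nat) (i0 : 'I_(n + n)).
Local Notation e0 := (delta_mx 0 i0 : 'rV[k]_(n + n)).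

Lemma mulmx_e0_trmx : e0 *m e0^T = 1%:M.
Proof. by rewrite trmx_delta mul_delta_mx; apply/matrixP => i j; rewrite !ord1 !mxE. Qed.

Lemma mulmx_trmx_e0 (p x : 'rV[k]_(n + n)) : p *m (e0^T *m x) = p 0 i0 *: x.
Proof.
by rewrite mulmxA trmx_delta -colE {1}[col _ _]mx11_scalar mul_scalar_mx mxE.
Qed.

Definition A_linear_mx (b : Mod k n -> Mod k n) : 'M[k]_2 :=
  let p := b (e0, 0) in let q := b (0, e0) in
  \matrix_(i, j) (if i == ord0 then if j == ord0 then p.1 else q.1
                  else if j == ord0 then p.2 else q.2) 0 i0.

Lemma A_linear_mxE (b : Mod k n -> Mod k n) :
  (forall m m', b (madd m m') = madd (b m) (b m')) ->
  (forall m a, b (mact m a) = mact (b m) a) ->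
  forall m, b m = mx2_act (A_linear_mx b) m.
Proof.
move=> bD bA [x y].
have xyE : (x, y) = madd (mact (e0, 0) (e0^T *m x)) (mact (0, e0) (e0^T *m y)).
  by rewrite /madd /mact /= !mul0mx !mulmxA mulmx_e0_trmx !mul1mx addr0 add0r.
by rewrite {1}xyE bD !bA /madd /mact /mx2_act /A_linear_mx /= !mulmx_trmx_e0 !mxE.
Qed.

Lemma mx2_act_inj g h : (forall m : Mod k n, mx2_act g m = mx2_act h m) -> g = h.
Proof.
move=> gh; have coord m := congr1 (fun m : Mod k n => (m.1 0 i0, m.2 0 i0)) (gh m).
move: (coord (e0, 0)) (coord (0, e0)); rewrite /mx2_act /= !mxE /= eqxx.
rewrite !mulr1 !mulr0 !addr0 !add0r => -[g00 g10] [g01 g11].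
by apply/matrixP => i j; case: (ord2_cases i) => ->; case: (ord2_cases j) => ->.
Qed.

Lemma det_eq1_of_chi_invariant (psi : k -> algC) g :
  nontriv_add_char psi ->
  (forall m m' : Mod k n, chiM psi (mx2_act g m) (mx2_act g m') = chiM psi m m') ->
  \det g = 1.
Proof.
move=> psi_char g_chi; apply: (nontriv_char_scale_eq1 psi_char) => t.
have := g_chi (t *: e0, 0) (0, e0 *m invmx (Jmat k n)).
rewrite /chiM mx2_act_pairing /= sform_invJ sform0l subr0.
by rewrite -scalemxAl mulmx_e0_trmx !mxE mulr1.
Qed.

End BasisVector.

Theorem mainTheorem5 (k : finFieldType) (n : nat) (psi : k -> algC) :
  odd #|k| -> (3 < #|k|)%N -> (1 <= n)%N -> nontriv_add_char psi ->
  exists f : 'M[k]_2 -> Mod k n -> Mod k n,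
    [/\ (forall g, \det g = 1 -> in_U psi (f g)),
        (forall b, in_U psi b -> exists g, \det g = 1 /\ forall m, f g m = b m),
        (forall g h, \det g = 1 -> \det h = 1 ->
           (forall m, f g m = f h m) -> g = h) &
        (forall g h, \det g = 1 -> \det h = 1 ->
           forall m, f (g *m h) m = f g (f h m))].
Proof.
move=> odd_k _ n_gt0 psi_char.
have two_neq0 := two_neq0_odd_card odd_k.
pose i0 : 'I_(n + n) := Ordinal (leq_trans n_gt0 (leq_addr n n)).
exists (@mx2_act k n); split.
- move=> g det_g; split.
  + by apply: mx2_act_A_linear_aut; rewrite unitmxE det_g unitr1.
  + by move=> u u_fixed m; rewrite /gammaM mx2_act_tildemx_form // det_g mul1r.
  + by move=> m m'; rewrite /chiM mx2_act_pairing det_g mul1r.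
- move=> b [[_ bD bA] _ b_chi].
  have bE := A_linear_mxE i0 bD bA.
  exists (A_linear_mx i0 b); split=> [|m]; last by rewrite bE.
  by apply: (det_eq1_of_chi_invariant i0 psi_char) => m m'; rewrite -!bE.
- by move=> g h _ _ gh; exact: (mx2_act_inj i0 gh).
- by move=> g h _ _ m; apply: mx2_actM.
Qed.
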